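(* Let $\mu$ be a distribution over $\{0,1\}^V$ and $\theta\in(0,1)$. The Markov chains $P_{\pi\text{-GD}}$, $P_{\mathrm{cl}}$ and $P_{\mathrm{s\text{-}GD}}$ are all reversible with respect to $\pi$.
   Context: Tilted $(\theta*\mu)(\sigma)\propto\mu(\sigma)\theta^{\|\sigma\|_1}$. $\mathsf{lift}:\{0,1\}^V\to\{0,1,\star\}^V$ random: independently per coordinate $0\mapsto0$, $1\mapsto\star$ w.p. $1-\theta$, $1\mapsto1$ w.p. $\theta$; $\mathsf{contr}$: $0\mapsto0$, $1,\star\mapsto1$. $\pi$: law of $\mathsf{lift}(X)$, $X\sim\mu$, support $\Omega(\pi)$. $P_{\pi\text{-GD}}$: pick $v$ uniformly, resample $X_v$ from $\pi$ given $X_{V\setminus\{v\}}$. $P_{\mathrm{cl}}$: $X\mapsto\mathsf{lift}(\mathsf{contr}(X))$. $P_{\mathrm{s\text{-}GD}}$: pick $v$ uniformly; if $X_v=\star$ keep; otherwise resample $X_v\in\{0,1\}$ from $(\theta*\mu)_v^{\sigma_{V\setminus\{v\}}}$, $\sigma=\mathsf{contr}(X)$. Reversible w.r.t. $\pi$: $\pi(\sigma)P(\sigma,\tau)=\pi(\tau)P(\tau,\sigma)$ for all $\sigma,\tau\in\Omega(\pi)$. *)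

From HB Require Import structures.
From mathcomp Require Import all_boot all_order all_algebra.
Set Implicit Arguments. Unset Strict Implicit. Unset Printing Implicit Defensive.
Import Order.TTheory GRing.Theory Num.Theory.
Local Open Scope ring_scope.

Inductive spin := S0 | S1 | Sstar.

Definition spin_enc (s : spin) : option bool :=
  match s with S0 => Some false | S1 => Some true | Sstar => None end.
Definition spin_dec (o : option bool) : spin :=
  match o with Some false => S0 | Some true => S1 | None => Sstar end.
Lemma spin_encK : cancel spin_enc spin_dec. Proof. by case. Qed.
HB.instance Definition _ := Finite.copy spin (can_type spin_encK).

Section Defs.
Variables (R : realFieldType) (V : finType).

Notation conf := {ffun V -> bool}.     (* {0,1}^V, true = 1 *)
Notation lconf := {ffun V -> spin}.

Definition is_distribution (mu : conf -> R) :=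
  (forall s, 0 <= mu s) /\ \sum_s mu s = 1.

Definition norm1 (s : conf) : nat := #|[set v | s v]|.

Definition tilted (mu : conf -> R) (theta : R) (s : conf) : R :=
  mu s * theta ^+ norm1 s / \sum_t (mu t * theta ^+ norm1 t).

Definition upd (T : Type) (x : {ffun V -> T}) (v : V) (c : T) : {ffun V -> T} :=
  [ffun u => if u == v then c else x u].

(* conditional marginal nu_v^{sigma_{V \ v}}(b) = P_nu(X_v = b | X_{V\v} = sigma_{V\v}) *)
Definition cond_marg (nu : conf -> R) (s : conf) (v : V) (b : bool) : R :=
  nu (upd s v b) / (nu (upd s v false) + nu (upd s v true)).

Definition contr (x : lconf) : conf := [ffun v => x v != S0].

(* one-site probability that lift maps a to s *)
Definition lift1 (theta : R) (a : bool) (s : spin) : R :=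
  match a, s with
  | false, S0 => 1
  | false, _ => 0
  | true, S0 => 0
  | true, S1 => theta
  | true, Sstar => 1 - theta
  end.

Definition lift_prob (theta : R) (s : conf) (t : lconf) : R :=
  \prod_v lift1 theta (s v) (t v).

Definition pi_law (mu : conf -> R) (theta : R) (t : lconf) : R :=
  \sum_s mu s * lift_prob theta s t.

Definition in_support (mu : conf -> R) (theta : R) (t : lconf) : bool :=
  pi_law mu theta t != 0.

Definition agree_off (x y : lconf) (v : V) : bool :=
  [forall u, (u != v) ==> (x u == y u)].

Definition P_piGD (mu : conf -> R) (theta : R) (x y : lconf) : R :=
  #|V|%:R^-1 * \sum_v
    (if agree_off x y v then
       pi_law mu theta y / \sum_(c : spin) pi_law mu theta (upd x v c)
     else 0).

Definition P_cl (theta : R) (x y : lconf) : R :=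
  lift_prob theta (contr x) y.

Definition P_sGD (mu : conf -> R) (theta : R) (x y : lconf) : R :=
  #|V|%:R^-1 * \sum_v
    (if x v == Sstar then (if y == x then 1 else 0)
     else if agree_off x y v && (y v != Sstar) then
       cond_marg (tilted mu theta) (contr x) v (y v == S1)
     else 0).

Definition reversible (mu : conf -> R) (theta : R) (P : lconf -> lconf -> R) :=
  forall x y, in_support mu theta x -> in_support mu theta y ->
    pi_law mu theta x * P x y = pi_law mu theta y * P y x.

End Defs.

(** Detailed balance holds for all pairs of configurations, whatever [mu] and
    [theta], and each site update of the two Glauber dynamics balances on its
    own.  Since [lift] never changes [contr],
    [pi(x) = mu(contr x) * P(lift(contr x) = x)].  For [P_piGD] the
    normalising constant is the same from both endpoints; for [P_cl] both
    sides vanish unless [contr x = contr y]; for [P_sGD], flipping a non-star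
    spin between [0] and [1] changes the lifting weight by exactly the factor
    [theta] that the tilt [theta ^ |sigma|] compensates. *)
From HB Require Import structures.
From mathcomp Require Import all_boot all_order all_algebra.
Import Order.TTheory GRing.Theory Num.Theory.
Local Open Scope ring_scope.
Set Implicit Arguments. Unset Strict Implicit.

Section Reversibility.
Variables (R : realFieldType) (V : finType).

Notation conf := {ffun V -> bool}.
Notation lconf := {ffun V -> spin}.

Implicit Types (mu : conf -> R) (theta : R) (x y : lconf) (v : V).

Lemma agree_offP x y v u : agree_off x y v -> u != v -> x u = y u.
Proof. by move=> /forallP/(_ u)/implyP agr /agr/eqP. Qed.

Lemma agree_offC x y v : agree_off x y v = agree_off y x v.
Proof. by apply: eq_forallb => u; rewrite [x u == _]eq_sym. Qed.

Lemma upd_agree_off x y v c : agree_off x y v -> upd x v c = upd y v c.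
Proof.
move=> agr; apply/ffunP => u; rewrite !ffunE.
by case: eqVneq => // /(agree_offP agr).
Qed.

Lemma upd_contr_agree_off x y v b :
  agree_off x y v -> upd (contr x) v b = upd (contr y) v b.
Proof.
move=> agr; apply/ffunP => u; rewrite !ffunE.
by case: eqVneq => // /(agree_offP agr) ->.
Qed.

Lemma upd_contr_nstar x y v :
  agree_off x y v -> y v != Sstar -> upd (contr x) v (y v == S1) = contr y.
Proof.
move=> agr ystar; apply/ffunP => u; rewrite !ffunE.
case: eqVneq => [->|/(agree_offP agr) -> //].
by case: (y v) ystar.
Qed.

Lemma lift_prob_eq0 theta (s : conf) x : s != contr x -> lift_prob theta s x = 0.
Proof.
move=> neq; have [u su] : exists u, s u != contr x u.
  apply/existsP; apply: contraNT neq => /existsPn eqs.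
  by apply/eqP/ffunP => u; apply/eqP/negPn/eqs.
rewrite /lift_prob (bigD1 u) //= (_ : lift1 _ _ _ = 0) ?mul0r //.
by move: su; rewrite ffunE; case: (s u); case: (x u).
Qed.

Lemma pi_lawE mu theta x :
  pi_law mu theta x = mu (contr x) * lift_prob theta (contr x) x.
Proof.
rewrite /pi_law (bigD1 (contr x)) //= big1 ?addr0 // => s neq.
by rewrite lift_prob_eq0 ?mulr0.
Qed.

Lemma expr_norm1 theta (s : conf) :
  theta ^+ norm1 s = \prod_u (if s u then theta else 1).
Proof. by rewrite /norm1 -prodr_const big_mkcond; apply: eq_bigr => u _; rewrite inE. Qed.

Lemma lift_prob_norm1_swap theta x y v :
  agree_off x y v -> x v != Sstar -> y v != Sstar ->
  lift_prob theta (contr x) x * theta ^+ norm1 (contr y) =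
  lift_prob theta (contr y) y * theta ^+ norm1 (contr x).
Proof.
move=> agr xstar ystar.
rewrite !expr_norm1 /lift_prob -!big_split /= (bigD1 v) // [RHS](bigD1 v) //=.
congr (_ * _); last by apply: eq_bigr => u /(agree_offP agr) xy; rewrite !ffunE xy.
by rewrite !ffunE; case: (x v) xstar; case: (y v) ystar => // _ _; rewrite mulrC.
Qed.

Lemma pi_law_tilted_swap mu theta x y v :
  agree_off x y v -> x v != Sstar -> y v != Sstar ->
  pi_law mu theta x * tilted mu theta (contr y) =
  pi_law mu theta y * tilted mu theta (contr x).
Proof.
move=> agr xstar ystar; rewrite !pi_lawE /tilted !mulrA; congr (_ / _).
rewrite -!mulrA !(mulrCA (lift_prob _ _ _)) (lift_prob_norm1_swap _ agr) //.
exact: mulrCA.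
Qed.

Lemma detailed_balance_avg (w : lconf -> R) (K : V -> lconf -> lconf -> R) x y :
  (forall v, w x * K v x y = w y * K v y x) ->
  w x * (#|V|%:R^-1 * \sum_v K v x y) = w y * (#|V|%:R^-1 * \sum_v K v y x).
Proof.
move=> site; rewrite mulrCA [RHS]mulrCA; congr (_ * _).
by rewrite !mulr_sumr; apply: eq_bigr => v _.
Qed.

Definition piGD_site mu theta v x y : R :=
  if agree_off x y v then
    pi_law mu theta y / \sum_(c : spin) pi_law mu theta (upd x v c)
  else 0.

Definition sGD_site mu theta v x y : R :=
  if x v == Sstar then (if y == x then 1 else 0)
  else if agree_off x y v && (y v != Sstar) then
    cond_marg (tilted mu theta) (contr x) v (y v == S1)
  else 0.

Lemma detailed_balance_piGD mu theta x y :
  pi_law mu theta x * P_piGD mu theta x y = pi_law mu theta y * P_piGD mu theta y x.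
Proof.
apply: (detailed_balance_avg (K := piGD_site mu theta)) => v.
rewrite /piGD_site agree_offC; case: ifP => [agr|_]; last by rewrite !mulr0.
rewrite mulrCA; congr (_ * (_ / _)); apply: eq_bigr => c _.
by rewrite (upd_agree_off _ agr).
Qed.

Lemma detailed_balance_cl mu theta x y :
  pi_law mu theta x * P_cl theta x y = pi_law mu theta y * P_cl theta y x.
Proof.
rewrite /P_cl !pi_lawE; have [eqc|neqc] := eqVneq (contr x) (contr y).
  by rewrite eqc mulrAC.
have neqc' : contr y != contr x by rewrite eq_sym.
by rewrite (lift_prob_eq0 _ neqc) (lift_prob_eq0 _ neqc') !mulr0.
Qed.

Lemma sGD_site_neq mu theta v x y : y != x ->
  sGD_site mu theta v x y =
  if [&& x v != Sstar, y v != Sstar & agree_off x y v] then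
    cond_marg (tilted mu theta) (contr x) v (y v == S1)
  else 0.
Proof. by rewrite /sGD_site => /negbTE ->; case: (x v == Sstar); rewrite // andbC. Qed.

Lemma detailed_balance_sGD mu theta x y :
  pi_law mu theta x * P_sGD mu theta x y = pi_law mu theta y * P_sGD mu theta y x.
Proof.
have [->|neq] := eqVneq y x; first by [].
apply: (detailed_balance_avg (K := sGD_site mu theta)) => v.
rewrite sGD_site_neq // sGD_site_neq 1?[x == y]eq_sym // [agree_off y x v]agree_offC.
rewrite [in RHS]andbCA; case: ifP => [/and3P[xstar ystar agr]|_]; last by rewrite !mulr0.
have agr' : agree_off y x v by rewrite agree_offC.
rewrite /cond_marg (upd_contr_nstar agr) // (upd_contr_nstar agr') //.
by rewrite !(upd_contr_agree_off _ agr) mulrA (pi_law_tilted_swap _ _ agr) // mulrA.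
Qed.

Lemma reversible_detailed_balance mu theta (P : lconf -> lconf -> R) :
  (forall x y, pi_law mu theta x * P x y = pi_law mu theta y * P y x) ->
  reversible mu theta P.
Proof. by move=> balance x y _ _. Qed.

End Reversibility.

Theorem lemma5p5 (R : realFieldType) (V : finType)
  (mu : {ffun V -> bool} -> R) (theta : R) :
  is_distribution mu -> 0 < theta < 1 ->
  [/\ reversible mu theta (P_piGD mu theta),
      reversible mu theta (P_cl (V:=V) theta)
    & reversible mu theta (P_sGD mu theta)].
Proof.
move=> _ _; split; apply: reversible_detailed_balance.
- exact: detailed_balance_piGD.
- exact: detailed_balance_cl.
- exact: detailed_balance_sGD.
Qed.
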